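(* The Jahangir graph $J_{2,3}$ is not greedy. Concretely, label $J_{2,3}$ as the 6-cycle $v_1v_2v_3v_4v_5v_6v_1$ together with a vertex $v_7$ adjacent to $v_1,v_3,v_5$. Then $f(J_{2,3})=8$, and for the distribution with $p(v_2)=p(v_6)=3$, $p(v_1)=p(v_7)=1$ and $p(v_3)=p(v_4)=p(v_5)=0$ (8 pebbles in total), no sequence of greedy pebbling moves with respect to the root $v_4$ places a pebble on $v_4$.
   Context: A pebbling distribution on a graph $G$ assigns a nonnegative integer number of pebbles to each vertex. A pebbling move removes two pebbles from a vertex and places one pebble on an adjacent vertex. The pebbling number $f(G)$ is the least $p$ such that, for every distribution of $p$ pebbles and every vertex $w$, some sequence of pebbling moves places a pebble on $w$. For the Jahangir graph $J_{n,m}$ ($m\ge 3$): it has $nm+1$ vertices, namely a cycle $C_{nm}$ plus one extra vertex adjacent to $m$ vertices of the cycle that are consecutively at distance $n$ from each other along the cycle. Given a root $w$, a pebbling move from $u$ to $v$ is greedy if $\mathrm{dist}(v,w)<\mathrm{dist}(u,w)$. A graph $G$ is greedy if, from every distribution of $f(G)$ pebbles and for every root $w$, one pebble can be moved to $w$ using only greedy pebbling moves. *)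

From mathcomp Require Import all_boot.
Set Implicit Arguments. Unset Strict Implicit. Unset Printing Implicit Defensive.

(* Graphs are simple graphs given by a symmetric irreflexive relation [e] on a
   finite vertex type [T]. *)

(** Graph distance: least k such that there is a walk of length k from u to v
    (returns #|T| if there is none; in a connected graph distances are < #|T|). *)
Fixpoint walkb (T : finType) (e : rel T) (k : nat) (u v : T) : bool :=
  match k with
  | 0 => u == v
  | k'.+1 => [exists x, e u x && walkb e k' x v]
  end.

Definition dist (T : finType) (e : rel T) (u v : T) : nat :=
  find (fun k => walkb e k u v) (iota 0 #|T|).

Definition distribution (T : finType) := {ffun T -> nat}.

Definition size_dist (T : finType) (D : distribution T) : nat := \sum_(x : T) D x.

Definition move_result (T : finType) (D : distribution T) (u v : T) : distribution T :=
  [ffun x => D x - 2 * (x == u) + (x == v)].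

Definition pstep (T : finType) (e : rel T) (ok : T -> T -> bool)
    (D D' : distribution T) : Prop :=
  exists u v, [&& e u v, ok u v & 2 <= D u] /\ D' = move_result D u v.

Inductive preach (T : finType) (e : rel T) (ok : T -> T -> bool)
    : distribution T -> distribution T -> Prop :=
  | preach_refl D : preach e ok D D
  | preach_step D D' D'' : pstep e ok D D' -> preach e ok D' D'' -> preach e ok D D''.

Definition solvable_with (T : finType) (e : rel T) (ok : T -> T -> bool)
    (D : distribution T) (w : T) : Prop :=
  exists D', preach e ok D D' /\ 0 < D' w.

Definition solvable (T : finType) (e : rel T) (D : distribution T) (w : T) : Prop :=
  solvable_with e (fun _ _ => true) D w.

Definition greedy_solvable (T : finType) (e : rel T) (D : distribution T) (w : T) : Prop :=
  solvable_with e (fun u v => dist e v w < dist e u w) D w.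

Definition all_solvable (T : finType) (e : rel T) (p : nat) : Prop :=
  forall (D : distribution T) (w : T), size_dist D = p -> solvable e D w.

Definition pebbling_number (T : finType) (e : rel T) (p : nat) : Prop :=
  all_solvable e p /\ forall q, all_solvable e q -> p <= q.

Definition greedy (T : finType) (e : rel T) : Prop :=
  forall p, pebbling_number e p ->
  forall (D : distribution T) (w : T), size_dist D = p -> greedy_solvable e D w.

(** Jahangir graph J_{n,m} on vertices 0..nm : cycle 0,1,...,nm-1 and the extra
    vertex nm adjacent to the cycle vertices divisible by n (0, n, 2n, ...). *)
Definition jahangir (n m : nat) : rel 'I_(n * m).+1 :=
  fun x y =>
    let N := n * m in
    [|| [&& (x : nat) < N, (y : nat) < N &
           ((y : nat) == x.+1 %% N) || ((x : nat) == y.+1 %% N)],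
        [&& (x : nat) == N, (y : nat) < N & n %| y]
      | [&& (y : nat) == N, (x : nat) < N & n %| x]].
Arguments jahangir : clear implicits.

(* Everything is a finite computation on J_{2,3}.  A pebbling move costs one
   pebble, so a distribution D is solvable iff a search of depth size_dist D
   finds a solution; coding distributions as lists of pebble counts makes that
   search executable.  Evaluating it shows that all 3003 distributions of 8
   pebbles are solvable for all 7 roots, that fewer than 8 pebbles on v6 cannot
   reach v3 at distance 3, and that no greedy search from the given distribution reaches v4. *)

From mathcomp Require Import all_boot zmodp zify.
Set Implicit Arguments. Unset Strict Implicit. Unset Printing Implicit Defensive.

Lemma size_dist_move (T : finType) (D : distribution T) (u v : T) :
  2 <= D u -> u != v -> (size_dist (move_result D u v)).+1 = size_dist D.
Proof.
move=> Du uv; rewrite /size_dist (bigD1 u) //= [RHS](bigD1 u) //= (bigD1 v) 1?eq_sym //=.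
rewrite [X in _ = _ + X](bigD1 v) 1?eq_sym //= !ffunE !eqxx (negbTE uv) eq_sym (negbTE uv).
rewrite (eq_bigr D) => [|x /andP[xv xu]]; last by rewrite ffunE (negbTE xu) (negbTE xv) subn0 addn0.
rewrite /=; lia.
Qed.

Lemma solvable_with_sub (T : finType) (e ok ok' : rel T) (D : distribution T) (w : T) :
  subrel ok ok' -> solvable_with e ok D w -> solvable_with e ok' D w.
Proof.
move=> sub_ok [D' [DD' D'w]]; exists D'; split=> //.
elim: DD' {D'w} => [D0 | D0 D1 D2 [u [v [/and3P[euv okuv Du] ->]]] _ IH].
  exact: preach_refl.
by apply: preach_step IH; exists u, v; rewrite euv sub_ok.
Qed.

Lemma jahangir_irrefl n m : 1 < n * m -> irreflexive (jahangir n m).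
Proof.
rewrite /jahangir => + [x /= _]; move: (n * m) => N N_gt1.
have succ_modF : x < N -> (x == x.+1 %% N) = false.
  move=> lt_xN; have [lt_x1N | ge_x1N] := ltnP x.+1 N; first by rewrite modn_small ?ltn_eqF.
  have -> : x.+1 = N by lia.
  rewrite modnn; lia.
by apply/negP => /or3P[/and3P[/succ_modF-> _] | /and3P[/eqP-> /[!ltnn]] | /and3P[/eqP-> /[!ltnn]]].
Qed.

(* [inZp] rather than [inord] or [ord_enum]: those go through [insub], whose
   opaque [idP] blocks [vm_compute]. *)
Definition enum_code n : seq 'I_n.+1 := [seq inZp i | i <- iota 0 n.+1].

Lemma mem_enum_code n (x : 'I_n.+1) : x \in enum_code n.
Proof. by apply/mapP; exists (val x); rewrite ?valZpK // mem_iota /=. Qed.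

Lemma existsb_enum_code n (P : pred 'I_n.+1) : [exists x, P x] = has P (enum_code n).
Proof.
by apply/existsP/hasP => [[x Px] | [x _ Px]]; exists x; rewrite ?mem_enum_code.
Qed.

Definition arcs n (e : rel 'I_n.+1) : seq ('I_n.+1 * 'I_n.+1) :=
  [seq p <- [seq (x, y) | x <- enum_code n, y <- enum_code n] | e p.1 p.2].

Lemma mem_arcs n (e : rel 'I_n.+1) u v : ((u, v) \in arcs e) = e u v.
Proof.
rewrite mem_filter /=; case: (e u v) => //.
exact: (allpairs_f pair (mem_enum_code u) (mem_enum_code v)).
Qed.

Lemma size_dist_fgraph n (D : distribution 'I_n) : size_dist D = sumn (fgraph D).
Proof. by rewrite /size_dist fgraph_codom /= codomE sumnE big_map big_enum. Qed.

Lemma fgraph_nth n (l : seq nat) :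
  size l = n -> fgraph [ffun x : 'I_n => nth 0 l x] = l :> seq nat.
Proof.
move=> sz; apply: (@eq_from_nth _ 0) => [|i]; first by rewrite size_tuple card_ord.
rewrite size_tuple => lt_in; have {}lt_in : i < n by rewrite card_ord in lt_in.
by rewrite -[i]/(nat_of_ord (Ordinal lt_in)) nth_fgraph_ord ffunE.
Qed.

Definition move_code (l : seq nat) (u v : nat) : seq nat :=
  mkseq (fun i => nth 0 l i - 2 * (i == u) + (i == v)) (size l).

Lemma fgraph_move n (D : distribution 'I_n) (u v : 'I_n) :
  fgraph (move_result D u v) = move_code (fgraph D) u v :> seq nat.
Proof.
apply: (@eq_from_nth _ 0) => [|i]; first by rewrite size_mkseq !size_tuple.
rewrite size_tuple => lt_in; have {}lt_in : i < n by rewrite card_ord in lt_in.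
rewrite nth_mkseq ?size_tuple ?card_ord //.
by rewrite -[i]/(nat_of_ord (Ordinal lt_in)) !nth_fgraph_ord ffunE.
Qed.

Fixpoint compositions (k n : nat) : seq (seq nat) :=
  if k is k'.+1 then [seq i :: l | i <- iota 0 n.+1, l <- compositions k' (n - i)]
  else if n is 0 then [:: [::]] else [::].

Lemma mem_compositions (l : seq nat) : l \in compositions (size l) (sumn l).
Proof.
elim: l => [|a l IHl] //; apply/allpairsPdep.
exists a, l; split=> //; first by rewrite mem_iota /= ltnS leq_addr.
by rewrite /= addKn.
Qed.

Section SolvableCode.
Variables (n : nat) (e ok : rel 'I_n) (A : seq ('I_n * 'I_n)).
Hypothesis mem_A : forall u v, ((u, v) \in A) = e u v.

(* [find _ A < size A] is [has _ A], but stops at the first success under the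
   call-by-value evaluation of [vm_compute]. *)
Fixpoint solvable_code (k : nat) (l : seq nat) (w : 'I_n) : bool :=
  if 0 < nth 0 l w then true else
  if k is k'.+1 then
    find (fun p => if ok p.1 p.2 && (2 <= nth 0 l p.1)
                   then solvable_code k' (move_code l p.1 p.2) w else false) A
      < size A
  else false.

Lemma solvable_codeS k l w :
  solvable_code k.+1 l w = (0 < nth 0 l w) || has (fun p =>
    [&& ok p.1 p.2, 2 <= nth 0 l p.1 & solvable_code k (move_code l p.1 p.2) w]) A.
Proof.
rewrite /= -has_find; case: ifP => // _.
by apply: eq_has => p; rewrite andbA; case: ifP.
Qed.

Lemma solvable_code_sound k (D : distribution 'I_n) w :
  solvable_code k (fgraph D) w -> solvable_with e ok D w.
Proof.
have here (D0 : distribution 'I_n) : 0 < D0 w -> solvable_with e ok D0 w.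
  by exists D0; split=> //; exact: preach_refl.
elim: k D => [|k IHk] D.
  by rewrite /= nth_fgraph_ord; case: ifP => // /here.
rewrite solvable_codeS nth_fgraph_ord => /orP[/here // | /hasP[[u v]]].
rewrite mem_A /= nth_fgraph_ord -fgraph_move => euv /and3P[okuv Du /IHk[D' [DD' D'w]]].
by exists D'; split=> //; apply: preach_step DD'; exists u, v; rewrite euv okuv Du.
Qed.

Hypothesis e_irrefl : irreflexive e.

Lemma solvable_code_complete (D D' : distribution 'I_n) w :
  preach e ok D D' -> 0 < D' w -> solvable_code (size_dist D) (fgraph D) w.
Proof.
elim=> {D D'} [D Dw | D D1 D' [u [v [/and3P[euv okuv Du] ->]]] _ IH /IH sol1].
  by case: (size_dist D) => [|k] /=; rewrite nth_fgraph_ord Dw.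
have uv : u != v by apply: contraTneq euv => ->; rewrite e_irrefl.
rewrite -(size_dist_move Du uv) solvable_codeS; apply/orP; right; apply/hasP.
by exists (u, v); rewrite ?mem_A //= okuv nth_fgraph_ord Du -fgraph_move.
Qed.

Lemma solvable_withP (D : distribution 'I_n) w :
  solvable_with e ok D w <-> solvable_code (size_dist D) (fgraph D) w.
Proof.
split=> [[D' [DD' D'w]] | ]; first exact: solvable_code_complete DD' D'w.
exact: solvable_code_sound.
Qed.

End SolvableCode.

Section DistCode.
Variables (n : nat) (e : rel 'I_n.+1).

Fixpoint walk_code (k : nat) (u v : 'I_n.+1) : bool :=
  if k is k'.+1 then has (fun x => e u x && walk_code k' x v) (enum_code n) else u == v.

Definition dist_code (u v : 'I_n.+1) : nat := find (fun k => walk_code k u v) (iota 0 n.+1).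

Lemma dist_codeE u v : dist e u v = dist_code u v.
Proof.
rewrite /dist card_ord; apply: eq_find => k.
by elim: k u => [|k IHk] u //=; rewrite existsb_enum_code; apply: eq_has => x; rewrite IHk.
Qed.

End DistCode.

Lemma jahangir23_solvable_withP ok D w :
  solvable_with (jahangir 2 3) ok D w <->
  solvable_code ok (arcs (jahangir 2 3)) (size_dist D) (fgraph D) w.
Proof. exact: solvable_withP (@mem_arcs _ _) (@jahangir_irrefl 2 3 isT) D w. Qed.

Lemma jahangir23_all_solvable : all_solvable (jahangir 2 3) 8.
Proof.
have check : all (fun l => all (solvable_code (fun _ _ => true) (arcs (jahangir 2 3)) 8 l)
                               (enum_code 6)) (compositions 7 8) by vm_compute.
move=> D w D8; apply/jahangir23_solvable_withP.
have := mem_compositions (fgraph D).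
rewrite size_tuple [in X in compositions X]card_ord -size_dist_fgraph D8.
by move/(allP check)/allP/(_ w (mem_enum_code w)).
Qed.

Lemma jahangir23_unsolvable q : q < 8 ->
  ~ solvable (jahangir 2 3) [ffun x : 'I_7 => nth 0 [:: 0; 0; 0; 0; 0; q; 0] x] (inZp 2).
Proof.
have check : all (fun q => ~~ solvable_code (fun _ _ => true) (arcs (jahangir 2 3)) q
                              [:: 0; 0; 0; 0; 0; q; 0] (inZp 2)) (iota 0 8) by vm_compute.
move=> lt_q8 /jahangir23_solvable_withP.
rewrite size_dist_fgraph fgraph_nth // [sumn _]/= !add0n addn0.
by apply/negP; move/allP: check; apply; rewrite mem_iota.
Qed.

Lemma jahangir23_pebbling_number : pebbling_number (jahangir 2 3) 8.
Proof.
split=> [|q solq]; first exact: jahangir23_all_solvable.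
rewrite leqNgt; apply/negP => lt_q8; apply: (jahangir23_unsolvable lt_q8); apply: solq.
by rewrite size_dist_fgraph fgraph_nth // [sumn _]/= !add0n addn0.
Qed.

Lemma jahangir23_not_greedy_solvable :
  ~ greedy_solvable (jahangir 2 3) [ffun x : 'I_7 => nth 0 [:: 1; 3; 0; 0; 0; 3; 1] x] (inZp 3).
Proof.
pose d x := dist_code (jahangir 2 3) x (inZp 3).
have check : ~~ solvable_code (fun u v => d v < d u) (arcs (jahangir 2 3)) 8
                             [:: 1; 3; 0; 0; 0; 3; 1] (inZp 3) by vm_compute.
have greedy_d : subrel (fun u v => dist (jahangir 2 3) v (inZp 3) < dist (jahangir 2 3) u (inZp 3))
                       (fun u v => d v < d u) by move=> u v; rewrite !dist_codeE.
move/(solvable_with_sub greedy_d)/jahangir23_solvable_withP.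
by rewrite size_dist_fgraph fgraph_nth //; apply/negP.
Qed.

Theorem theorem2p3 :
  let G := jahangir 2 3 in
  let v := fun k : nat => (inord k.-1 : 'I_(2 * 3).+1) in
  let D0 := [ffun x : 'I_(2 * 3).+1 => nth 0 [:: 1; 3; 0; 0; 0; 3; 1] x] in
  [/\ pebbling_number G 8,
      size_dist D0 = 8,
      ~ greedy_solvable G D0 (v 4)
    & ~ greedy G].
Proof.
move=> G v D0.
have D0_size : size_dist D0 = 8 by rewrite size_dist_fgraph fgraph_nth.
have v4 : v 4 = inZp 3 by apply: val_inj; rewrite /= inordK.
have not_greedy_solvable : ~ greedy_solvable G D0 (v 4).
  by rewrite v4; exact: jahangir23_not_greedy_solvable.
split=> //; first exact: jahangir23_pebbling_number.
move=> G_greedy; exact: not_greedy_solvable (G_greedy _ jahangir23_pebbling_number _ _ D0_size).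
Qed.
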